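(* Let $\theta_0>0$ and let $F_N=\sum_{j=1}^N w_j\delta_{z_j}$ and $F'_{N'}=\sum_{j=1}^{N'}w'_j\delta_{z'_j}$ be probability measures on $(0,\infty)$. Then for every $K\le\min(N,N')$, \[ \|p_{\theta_0,F_N}-p_{\theta_0,F'_{N'}}\|_1\le 4\max_{1\le j\le K}\frac{|z_j-z'_j|}{z_j}+\sum_{j=1}^K|w_j-w'_j|+\sum_{j=K+1}^N w_j+\sum_{j=K+1}^{N'}w'_j. \]
   Context: For $\theta>0$ and a probability measure $F$ on $(0,\infty)$, $p_{\theta,F}(x,y)=\int z^2\theta e^{-z(x+\theta y)}\,dF(z)$ for $(x,y)\in(0,\infty)^2$. $\|\cdot\|_1$ is the $L^1$ norm with respect to Lebesgue measure on $(0,\infty)^2$. *)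

From HB Require Import structures.
From mathcomp Require Import all_boot all_order all_algebra.
From mathcomp Require Import all_classical all_reals all_analysis.
Set Implicit Arguments. Unset Strict Implicit. Unset Printing Implicit Defensive.
Import Order.TTheory GRing.Theory Num.Theory.
Local Open Scope ring_scope.

(* Density p_{theta,F}(x,y) = \int z^2 theta e^{-z(x+theta y)} dF(z) for the
   finite discrete mixing measure F = \sum_{j<N} w j \delta_{z j}
   (the integral against this measure is literally this finite sum). *)
Definition pmix (R : realType) (N : nat) (w z : nat -> R) (theta : R)
  (q : R * R) : R :=
  \sum_(j < N) w j * (z j ^+ 2 * theta * expR (- (z j * (q.1 + theta * q.2)))).

Definition is_prob_atoms (R : realType) (N : nat) (w z : nat -> R) : Prop :=
  (forall j, (j < N)%N -> 0 <= w j) /\ (forall j, (j < N)%N -> 0 < z j) /\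
  \sum_(j < N) w j = 1.

Definition quadrant (R : realType) : set (R * R) :=
  [set q | 0 < q.1 /\ 0 < q.2].

(* Each atom contributes the density e_c(x,y) = c^2 theta exp(-c(x + theta y)),
   the product of the exponential densities of rates c and c theta, so it has
   mass 1 on the quadrant.  Pairing the first K atoms,
   |p - p'| <= sum_{j<K} (|w_j - w'_j| e_{z_j} + w'_j |e_{z_j} - e_{z'_j}|)
   plus the two unpaired tails, and everything reduces to bounding the L1
   distance of e_a and e_b.  For a <= b the function (a/b)^2 e_b lies below
   both e_a and e_b, and |x - y| <= x + y - 2h for any common lower bound h,
   so ||e_a - e_b||_1 <= 2 - 2(a/b)^2 <= 4|a - b|/a.  Since the w'_j sum to at
   most 1, the weighted sum of these bounds is at most 4 max_j |z_j - z'_j|/z_j. *)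

From HB Require Import structures.
From mathcomp Require Import all_boot all_order all_algebra.
From mathcomp Require Import all_classical all_reals all_analysis.
From mathcomp Require Import measurable_realfun.
From mathcomp Require Import ring lra.
Set Implicit Arguments.
Unset Strict Implicit.
Unset Printing Implicit Defensive.
Import Order.TTheory GRing.Theory Num.Theory.
Import numFieldTopology.Exports.
Local Open Scope classical_set_scope.
Local Open Scope ring_scope.

Section is_integral.
Context d (T : measurableType d) (R : realType).
Variables (mu : {measure set T -> \bar R}) (D : set T).
Hypothesis mD : measurable D.

Definition is_integral (f : T -> R) (v : R) :=
  mu.-integrable D (EFin \o f) /\ (\int[mu]_(x in D) (f x)%:E = v%:E)%E.

Lemma is_integral0 : is_integral 0 0.
Proof. by split; [exact: integrable0 | exact: integral0]. Qed.

Lemma is_integralD f g u v :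
  is_integral f u -> is_integral g v -> is_integral (fun x => f x + g x) (u + v).
Proof.
move=> [if_ ef] [ig eg]; split.
  rewrite (_ : EFin \o _ = (EFin \o f) \+ (EFin \o g)); first exact: integrableD.
  by apply/funext => x; rewrite /= EFinD.
under eq_integral do rewrite /= EFinD.
by rewrite integralD // ef eg EFinD.
Qed.

Lemma is_integralZl k f v :
  is_integral f v -> is_integral (fun x => k * f x) (k * v).
Proof.
move=> [if_ ef]; split.
  rewrite (_ : EFin \o _ = (fun x => k%:E * (f x)%:E)%E); first exact: integrableZl.
  by apply/funext => x; rewrite /= EFinM.
under eq_integral do rewrite EFinM.
by rewrite integralZl // ef EFinM.
Qed.

Lemma is_integralB f g u v :
  is_integral f u -> is_integral g v -> is_integral (fun x => f x - g x) (u - v).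
Proof.
move=> If Ig; have := is_integralD If (is_integralZl (-1) Ig).
by under eq_fun do rewrite mulN1r; rewrite mulN1r.
Qed.

Lemma is_integral_sum (I : eqType) (s : seq I) (P : pred I)
    (F : I -> T -> R) (v : I -> R) :
  (forall i, i \in s -> P i -> is_integral (F i) (v i)) ->
  is_integral (fun x => \sum_(i <- s | P i) F i x) (\sum_(i <- s | P i) v i).
Proof.
move=> IF; rewrite -fct_sumE big_seq_cond [X in is_integral _ X]big_seq_cond.
elim/big_rec2: _ => [|i g u /andP[si Pi] Igu]; first exact: is_integral0.
exact: is_integralD (IF i si Pi) Igu.
Qed.

Lemma le_integral_norm f g v :
  mu.-integrable D (EFin \o f) -> is_integral g v ->
  {in D, forall x, `|f x| <= g x} ->
  (\int[mu]_(x in D) `|f x|%:E <= v%:E)%E.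
Proof.
by move=> If [Ig <-] fg; apply: le_integral => //; exact: integrable_norm.
Qed.

End is_integral.

Lemma ge0_integral_setX_mul d1 d2 (T1 : measurableType d1)
    (T2 : measurableType d2) (R : realType)
    (m1 : {sigma_finite_measure set T1 -> \bar R})
    (m2 : {sigma_finite_measure set T2 -> \bar R})
    (D1 : set T1) (D2 : set T2) (f : T1 -> R) (g : T2 -> R) :
  measurable D1 -> measurable D2 ->
  measurable_fun D1 f -> measurable_fun D2 g ->
  (forall x, D1 x -> 0 <= f x) -> (forall y, D2 y -> 0 <= g y) ->
  (\int[m1 \x m2]_(z in D1 `*` D2) (f z.1 * g z.2)%:E =
   \int[m1]_(x in D1) (f x)%:E * \int[m2]_(y in D2) (g y)%:E)%E.
Proof.
move=> mD1 mD2 mf mg f0 g0.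
have mf' : measurable_fun setT (f \_ D1) by exact/(measurable_restrictT f mD1).1.
have mg' : measurable_fun setT (g \_ D2) by exact/(measurable_restrictT g mD2).1.
have f0' : forall x, 0 <= (f \_ D1) x by exact: restrict_ge0.
have g0' : forall y, 0 <= (g \_ D2) y by exact: restrict_ge0.
rewrite [LHS]integral_mkcond (integral_mkcond D1) (integral_mkcond D2).
rewrite !restrict_EFin.
have -> : (fun z => f z.1 * g z.2) \_ (D1 `*` D2) =
    (fun z => (f \_ D1) z.1 * (g \_ D2) z.2).
  apply/funext => -[x y]; rewrite !patchE in_setX /=.
  by case: (x \in D1); case: (y \in D2); rewrite ?mulr0 ?mul0r.
rewrite fubini_tonelli1 //=; last 2 first.
- apply/measurable_EFinP; apply: measurable_funM.
    exact: measurableT_comp mf' measurable_fst.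
  exact: measurableT_comp mg' measurable_snd.
- by move=> z; rewrite lee_fin mulr_ge0.
rewrite /fubini_F -ge0_integralZr //; last 2 first.
- by move=> x _; rewrite lee_fin.
- by apply: integral_ge0 => y _; rewrite lee_fin.
- apply: eq_integral => x _; under eq_integral do rewrite /= EFinM.
  rewrite ge0_integralZl ?lee_fin //; first exact/measurable_EFinP.
  by move=> y _; rewrite lee_fin.
- exact/measurable_EFinP.
Qed.

Lemma ler_dist_common_lb (R : realDomainType) (x y h : R) :
  h <= x -> h <= y -> `|x - y| <= x + y - 2 * h.
Proof. by move=> hx hy; rewrite ler_norml; apply/andP; split; lra. Qed.

Lemma sumr_ord_split (R : nmodType) (K n : nat) (F : nat -> R) : (K <= n)%N ->
  \sum_(j < n) F j = \sum_(j < K) F j + \sum_(K <= j < n) F j.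
Proof. by move=> Kn; rewrite -!(big_mkord xpredT) (big_cat_nat (leq0n K) Kn). Qed.

Lemma ler_sumr_ord_prefix (R : numDomainType) (K n : nat) (F : nat -> R) :
  (K <= n)%N -> (forall j, (K <= j < n)%N -> 0 <= F j) ->
  \sum_(j < K) F j <= \sum_(j < n) F j.
Proof.
move=> Kn F0; rewrite (sumr_ord_split F Kn) lerDl big_nat_cond.
by apply: sumr_ge0 => j /andP[/F0].
Qed.

Lemma mixture_dist_le (R : realDomainType) (N N' K : nat) (w w' f g : nat -> R) :
  (K <= N)%N -> (K <= N')%N ->
  (forall j, (j < N)%N -> 0 <= w j) -> (forall j, (j < N')%N -> 0 <= w' j) ->
  (forall j, 0 <= f j) -> (forall j, 0 <= g j) ->
  `|\sum_(j < N) w j * f j - \sum_(j < N') w' j * g j| <=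
  \sum_(j < K) (`|w j - w' j| * f j + w' j * `|f j - g j|) +
  \sum_(K <= j < N) w j * f j + \sum_(K <= j < N') w' j * g j.
Proof.
move=> KN KN' w0 w'0 f0 g0.
rewrite (sumr_ord_split (fun j => w j * f j) KN).
rewrite (sumr_ord_split (fun j => w' j * g j) KN') opprD addrACA -[X in _ <= X]addrA.
apply: le_trans (ler_normD _ _) _; apply: lerD.
  rewrite -sumrB; apply: le_trans (ler_norm_sum _ _ _) _; apply: ler_sum => j _.
  have w'j0 : 0 <= w' j by apply: w'0; exact: leq_trans (ltn_ord j) KN'.
  rewrite (_ : _ - _ = (w j - w' j) * f j + w' j * (f j - g j)); last by ring.
  apply: le_trans (ler_normD _ _) _.
  by rewrite !normrM (ger0_norm (f0 j)) (ger0_norm w'j0).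
have tail_ge0 n (u h : nat -> R) : (forall j, (j < n)%N -> 0 <= u j) ->
    (forall j, 0 <= h j) -> 0 <= \sum_(K <= j < n) u j * h j.
  move=> u0 h0; rewrite big_nat_cond; apply: sumr_ge0 => j /andP[/andP[_ jn] _].
  by rewrite mulr_ge0 ?u0.
apply: le_trans (ler_normB _ _) _.
by rewrite !ger0_norm ?tail_ge0.
Qed.

Lemma convex_comb_le_bigmax (R : realDomainType) (K : nat) (w x : nat -> R) :
  (forall j, (j < K)%N -> 0 <= w j) -> \sum_(j < K) w j <= 1 ->
  \sum_(j < K) w j * x j <= \big[Num.max/0]_(j < K) x j.
Proof.
move=> w0 sw1; set M := \big[Num.max/0]_(j < K) x j.
have M0 : 0 <= M by exact: bigmax_ge_id.
apply: le_trans (_ : \sum_(j < K) w j * M <= M).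
  apply: ler_sum => j _; rewrite ler_wpM2l ?w0 //.
  exact: (le_bigmax 0 (fun j : 'I_K => x j) j).
by rewrite -mulr_suml ler_piMl.
Qed.

Lemma two_subr_sqr_minmax_ratio_le (R : realFieldType) (a b : R) : 0 < a -> 0 < b ->
  2 - 2 * (Num.min a b / Num.max a b) ^+ 2 <= 4 * (`|a - b| / a).
Proof.
move=> a0 b0; rewrite -subr_ge0.
have [ab|ba] := lerP a b.
- have -> : 4 * ((b - a) / a) - (2 - 2 * (a / b) ^+ 2) =
      2 * (b - a) ^+ 2 * (2 * b + a) / (a * b ^+ 2).
    by field; rewrite !gt_eqF.
  apply: divr_ge0; first by rewrite mulr_ge0 ?mulr_ge0 ?sqr_ge0 //; lra.
  by rewrite mulr_ge0 ?sqr_ge0 ?ltW.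
- have -> : 4 * ((a - b) / a) - (2 - 2 * (b / a) ^+ 2) = 2 * (a - b) ^+ 2 / a ^+ 2.
    by field; rewrite gt_eqF.
  by apply: divr_ge0; [rewrite mulr_ge0 ?sqr_ge0 | rewrite sqr_ge0].
Qed.

Lemma integral_exponential_pdf_itv_gt0 (R : realType) (r : R) : 0 < r ->
  (\int[lebesgue_measure]_(x in `]0%R, +oo[) (exponential_pdf r x)%:E = 1)%E.
Proof.
move=> r0; rewrite integral_itv_obnd_cbnd; last first.
  by apply/measurable_EFinP; exact: measurable_funTS (measurable_exponential_pdf r).
rewrite -(integral_exponential_pdf r0) [LHS]integral_mkcond.
apply: eq_integral => x _; rewrite patchE; case: ifPn => // /negP.
by rewrite inE /= in_itv /= andbT => /negP; rewrite -ltNge => /lt0_exponential_pdf ->.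
Qed.

Lemma quadrantE {R : realType} : @quadrant R = `]0%R, +oo[ `*` `]0%R, +oo[.
Proof. by apply/seteqP; split => q /=; rewrite !in_itv /= !andbT. Qed.

(* The cast selects the Borel sets of R on which lebesgue_measure is defined. *)
Lemma measurable_quadrant {R : realType} :
  measurable (@quadrant R : set (measurableTypeR R * measurableTypeR R)).
Proof. by rewrite quadrantE; exact: measurableX. Qed.

Section bexp_pdf.
Context {R : realType}.
Variable theta : R.
Hypothesis theta_gt0 : 0 < theta.
Local Notation mu2 := ((@lebesgue_measure R) \x (@lebesgue_measure R))%E.
Let mQ := @measurable_quadrant R.

(* [pmix N w z theta] unfolds to [fun q => \sum_(j < N) w j * bexp_pdf (z j) q]. *)
Definition bexp_pdf (c : R) (q : R * R) : R :=
  c ^+ 2 * theta * expR (- (c * (q.1 + theta * q.2))).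

Lemma bexp_pdf_ge0 c q : 0 <= bexp_pdf c q.
Proof. by rewrite /bexp_pdf mulr_ge0 ?expR_ge0 // mulr_ge0 ?sqr_ge0 ?ltW. Qed.

Lemma measurable_bexp_pdf c : measurable_fun setT (bexp_pdf c).
Proof.
apply: measurable_funM; first exact: measurable_cst.
apply: measurableT_comp; first exact: measurable_expR.
apply: measurable_funN; apply: measurable_funM; first exact: measurable_cst.
apply: measurable_funD; first exact: measurable_fst.
by apply: measurable_funM; [exact: measurable_cst | exact: measurable_snd].
Qed.

Lemma bexp_pdfE c q : quadrant q ->
  bexp_pdf c q = exponential_pdf c q.1 * exponential_pdf (c * theta) q.2.
Proof.
case: q => x y [/= x0 y0]; rewrite !exponential_pdfE ?ltW //= /bexp_pdf /=.
by rewrite (_ : - _ = - c * x + - (c * theta) * y) ?expRD; ring.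
Qed.

Lemma integral_bexp_pdf c : 0 < c ->
  (\int[mu2]_(q in @quadrant R) (bexp_pdf c q)%:E = 1)%E.
Proof.
move=> c0; under eq_integral => q /set_mem Qq do rewrite bexp_pdfE //.
rewrite quadrantE ge0_integral_setX_mul //.
- by rewrite !integral_exponential_pdf_itv_gt0 ?mule1 ?mulr_gt0.
- exact: measurable_funTS (measurable_exponential_pdf _).
- exact: measurable_funTS (measurable_exponential_pdf _).
- by move=> x _; rewrite exponential_pdf_ge0 ?ltW.
- by move=> y _; rewrite exponential_pdf_ge0 ?mulr_ge0 ?ltW.
Qed.

Lemma is_integral_bexp_pdf c : 0 < c ->
  is_integral mu2 (@quadrant R) (bexp_pdf c) 1.
Proof.
move=> c0; split; last exact: integral_bexp_pdf.
apply/integrableP; split.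
  by apply/measurable_EFinP; exact: measurable_funTS (measurable_bexp_pdf c).
under eq_integral do rewrite /= ger0_norm ?bexp_pdf_ge0 //.
by rewrite integral_bexp_pdf // ltry.
Qed.

Lemma bexp_pdf_ratio_le a b q : 0 < a -> a <= b -> quadrant q ->
  (a / b) ^+ 2 * bexp_pdf b q <= bexp_pdf a q.
Proof.
move=> a0 ab [x0 y0]; have b0 : 0 < b := lt_le_trans a0 ab.
rewrite /bexp_pdf; set Eb := expR (- (b * _)).
have -> : (a / b) ^+ 2 * (b ^+ 2 * theta * Eb) = a ^+ 2 * theta * Eb.
  by field; rewrite gt_eqF.
apply: ler_wpM2l; first by rewrite mulr_ge0 ?sqr_ge0 // ltW.
by rewrite /Eb ler_expR lerN2 ler_wpM2r // addr_ge0 ?mulr_ge0 ?ltW.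
Qed.

Definition bexp_dist_majorant (a b : R) (q : R * R) : R :=
  bexp_pdf a q + bexp_pdf b q -
  2 * ((Num.min a b / Num.max a b) ^+ 2 * bexp_pdf (Num.max a b) q).

Lemma dist_bexp_pdf_le a b q : 0 < a -> 0 < b -> quadrant q ->
  `|bexp_pdf a q - bexp_pdf b q| <= bexp_dist_majorant a b q.
Proof.
rewrite /bexp_dist_majorant.
wlog ab : a b / a <= b => [hwlog a0 b0|a0 b0 Qq].
  have [ab|ba] := boolP (a <= b); first exact: hwlog.
  rewrite distrC [_ + bexp_pdf b q]addrC minC maxC.
  by apply: hwlog => //; rewrite ltW // ltNge.
rewrite (min_l ab) (max_r ab); apply: ler_dist_common_lb.
  exact: bexp_pdf_ratio_le.
rewrite ler_piMl ?bexp_pdf_ge0 // expr_le1 ?divr_ge0 ?(ltW a0) ?(ltW b0) //.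
by rewrite ler_pdivrMr // mul1r.
Qed.

Lemma is_integral_bexp_dist_majorant a b : 0 < a -> 0 < b ->
  is_integral mu2 (@quadrant R) (bexp_dist_majorant a b)
    (2 - 2 * (Num.min a b / Num.max a b) ^+ 2).
Proof.
move=> a0 b0; have M0 : 0 < Num.max a b by rewrite lt_max a0.
have := is_integralB mQ
  (is_integralD mQ (is_integral_bexp_pdf a0) (is_integral_bexp_pdf b0))
  (is_integralZl mQ 2 (is_integralZl mQ ((Num.min a b / Num.max a b) ^+ 2)
     (is_integral_bexp_pdf M0))).
by rewrite mulr1.
Qed.

Lemma is_integral_scaled_bexp_pdf k c : 0 < c ->
  is_integral mu2 (@quadrant R) (fun q => k * bexp_pdf c q) k.
Proof.
by move=> c0; have := is_integralZl mQ k (is_integral_bexp_pdf c0); rewrite mulr1.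
Qed.

Lemma is_integral_pmix N (w z : nat -> R) : (forall j, (j < N)%N -> 0 < z j) ->
  is_integral mu2 (@quadrant R) (pmix N w z theta) (\sum_(j < N) w j).
Proof.
move=> z_gt0.
apply: (is_integral_sum (F := fun (j : 'I_N) q => w j * bexp_pdf (z j) q) mQ) => j _ _.
exact: is_integral_scaled_bexp_pdf (z_gt0 j (ltn_ord j)).
Qed.

End bexp_pdf.

Section mixture_bound.
Context {R : realType}.
Variables (theta : R) (N N' K : nat) (w z w' z' : nat -> R).
Hypotheses (theta_gt0 : 0 < theta) (KN : (K <= N)%N) (KN' : (K <= N')%N).
Hypotheses (w_ge0 : forall j, (j < N)%N -> 0 <= w j)
  (w'_ge0 : forall j, (j < N')%N -> 0 <= w' j)
  (z_gt0 : forall j, (j < N)%N -> 0 < z j)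
  (z'_gt0 : forall j, (j < N')%N -> 0 < z' j).
Local Notation mu2 := ((@lebesgue_measure R) \x (@lebesgue_measure R))%E.
Let mQ := @measurable_quadrant R.

Definition mixture_majorant (q : R * R) : R :=
  \sum_(j < K) (`|w j - w' j| * bexp_pdf theta (z j) q +
                w' j * bexp_dist_majorant theta (z j) (z' j) q) +
  \sum_(K <= j < N) w j * bexp_pdf theta (z j) q +
  \sum_(K <= j < N') w' j * bexp_pdf theta (z' j) q.

Definition mixture_majorant_mass : R :=
  \sum_(j < K) (`|w j - w' j| +
     w' j * (2 - 2 * (Num.min (z j) (z' j) / Num.max (z j) (z' j)) ^+ 2)) +
  \sum_(K <= j < N) w j + \sum_(K <= j < N') w' j.

Lemma dist_pmix_le_majorant q : quadrant q ->
  `|pmix N w z theta q - pmix N' w' z' theta q| <= mixture_majorant q.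
Proof.
move=> Qq; apply: le_trans (mixture_dist_le KN KN' w_ge0 w'_ge0
  (fun j => bexp_pdf_ge0 theta_gt0 (z j) q)
  (fun j => bexp_pdf_ge0 theta_gt0 (z' j) q)) _.
rewrite lerD2r lerD2r; apply: ler_sum => j _; rewrite lerD2l.
have jN : (j < N)%N := leq_trans (ltn_ord j) KN.
have jN' : (j < N')%N := leq_trans (ltn_ord j) KN'.
by rewrite ler_wpM2l ?w'_ge0 // dist_bexp_pdf_le ?z_gt0 ?z'_gt0.
Qed.

Lemma is_integral_mixture_majorant :
  is_integral mu2 (@quadrant R) mixture_majorant mixture_majorant_mass.
Proof.
rewrite /mixture_majorant /mixture_majorant_mass.
apply: (is_integralD mQ); first apply: (is_integralD mQ).
- apply: (is_integral_sum (F := fun (j : 'I_K) q =>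
    `|w j - w' j| * bexp_pdf theta (z j) q +
    w' j * bexp_dist_majorant theta (z j) (z' j) q) mQ) => j _ _.
  have jN : (j < N)%N := leq_trans (ltn_ord j) KN.
  have jN' : (j < N')%N := leq_trans (ltn_ord j) KN'.
  apply: (is_integralD mQ); first exact: is_integral_scaled_bexp_pdf (z_gt0 jN).
  exact (is_integralZl mQ (w' j)
    (is_integral_bexp_dist_majorant theta_gt0 (z_gt0 jN) (z'_gt0 jN'))).
- apply: (is_integral_sum (F := fun j q => w j * bexp_pdf theta (z j) q) mQ).
  move=> j; rewrite mem_index_iota => /andP[_ jN] _.
  exact: is_integral_scaled_bexp_pdf (z_gt0 jN).
- apply: (is_integral_sum (F := fun j q => w' j * bexp_pdf theta (z' j) q) mQ).
  move=> j; rewrite mem_index_iota => /andP[_ jN'] _.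
  exact: is_integral_scaled_bexp_pdf (z'_gt0 jN').
Qed.

Lemma mixture_majorant_mass_le : \sum_(j < N') w' j = 1 ->
  mixture_majorant_mass <=
  4 * \big[Num.max/0]_(j < K) (`|z j - z' j| / z j) +
  \sum_(j < K) `|w j - w' j| + \sum_(K <= j < N) w j + \sum_(K <= j < N') w' j.
Proof.
move=> sw'; rewrite /mixture_majorant_mass big_split /= [_ + \sum_(j < K) _]addrC.
rewrite !lerD2r.
have w'K_ge0 j : (j < K)%N -> 0 <= w' j by move=> jK; rewrite w'_ge0 ?(leq_trans jK).
apply: le_trans (_ : \sum_(j < K) w' j * (4 * (`|z j - z' j| / z j)) <= _).
  apply: ler_sum => j _; rewrite ler_wpM2l ?w'K_ge0 //.
  by rewrite two_subr_sqr_minmax_ratio_le ?z_gt0 ?z'_gt0 ?(leq_trans (ltn_ord j)).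
rewrite (eq_bigr (fun j : 'I_K => 4 * (w' j * (`|z j - z' j| / z j)))); last first.
  by move=> j _; rewrite mulrCA.
rewrite -mulr_sumr ler_wpM2l //.
apply: (@convex_comb_le_bigmax _ K w' (fun j => `|z j - z' j| / z j)) => //.
rewrite -sw'.
by apply: ler_sumr_ord_prefix => // j /andP[_ /w'_ge0].
Qed.

End mixture_bound.

Local Open Scope ereal_scope.

Theorem mainTheorem6 (R : realType) (theta0 : R) (N N' K : nat)
  (w z w' z' : nat -> R) :
  (0 < theta0)%R ->
  is_prob_atoms N w z -> is_prob_atoms N' w' z' ->
  (K <= minn N N')%N ->
  \int[(@lebesgue_measure R) \x (@lebesgue_measure R)]_(q in @quadrant R)
     (`| pmix N w z theta0 q - pmix N' w' z' theta0 q |)%:E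
  <= (4 * \big[Num.max/0%R]_(j < K) (`| z j - z' j | / z j)
      + \sum_(j < K) `| w j - w' j |
      + \sum_(K <= j < N) w j
      + \sum_(K <= j < N') w' j)%:E.
Proof.
move=> theta0_gt0 [w_ge0 [z_gt0 _]] [w'_ge0 [z'_gt0 sw']].
rewrite leq_min => /andP[KN KN'].
have mQ := @measurable_quadrant R.
have Idiff := is_integralB mQ (is_integral_pmix theta0_gt0 w z_gt0)
  (is_integral_pmix theta0_gt0 w' z'_gt0).
refine (le_trans (le_integral_norm mQ Idiff.1
  (is_integral_mixture_majorant w w' theta0_gt0 KN KN' z_gt0 z'_gt0) _) _).
  by move=> q /set_mem Qq; exact: dist_pmix_le_majorant.
by rewrite lee_fin mixture_majorant_mass_le.
Qed.
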